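(* Let $T$ be a tree on $n\ge3$ vertices with distance matrix $M$, and let $C=M\left(\frac{2}{n}J_n-I_n\right)$. Then $C$ is positive definite in the sense that $\mathbf{x}^TC\mathbf{x}>0$ for every nonzero $\mathbf{x}\in\mathbb{R}^n$.
   Context: The distance matrix $M$ of $T$ is the $n\times n$ matrix whose $(i,j)$ entry is the number of edges on the path between vertices $i$ and $j$ of $T$. $J_n$ is the $n\times n$ all-ones matrix and $I_n$ the identity matrix. $C$ need not be symmetric. *)

From HB Require Import structures.
From mathcomp Require Import all_boot all_order all_algebra.
From mathcomp Require Import reals.
Set Implicit Arguments. Unset Strict Implicit. Unset Printing Implicit Defensive.
Import Order.TTheory GRing.Theory Num.Theory.

Definition simple_graph (n : nat) (e : rel 'I_n) : Prop :=
  symmetric e /\ irreflexive e.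

Definition edge_set (n : nat) (e : rel 'I_n) : {set 'I_n * 'I_n} :=
  [set p : 'I_n * 'I_n | (nat_of_ord p.1 < nat_of_ord p.2)%N && e p.1 p.2].

Definition is_tree (n : nat) (e : rel 'I_n) : Prop :=
  [/\ simple_graph e, (forall i j, connect e i j) & #|edge_set e| = n.-1].

Definition walk_of_length (n : nat) (e : rel 'I_n) (k : nat) (i j : 'I_n) : bool :=
  [exists p : k.-tuple 'I_n, path e i p && (last i p == j)].

Definition gdist (n : nat) (e : rel 'I_n) (i j : 'I_n) : nat :=
  find (fun k => walk_of_length e k i j) (iota 0 n).

Definition dist_matrix (R : pzRingType) (n : nat) (e : rel 'I_n) : 'M[R]_n :=
  \matrix_(i, j) ((gdist e i j)%:R)%R.

From mathcomp Require Import all_boot all_order all_algebra.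
From mathcomp Require Import reals.
From mathcomp Require Import zify ring.
Import Order.TTheory GRing.Theory Num.Theory.
Set Implicit Arguments. Unset Strict Implicit. Unset Printing Implicit Defensive.

(* Every edge of a tree splits the vertices into two sides; take one side [A]
   as a cut.  Two vertices are at distance the number of cuts separating them,
   so the distance matrix is the sum of the cut matrices
   [K_A i j = [(i \in A) != (j \in A)]].  If [a] and [b] are the sums of the
   entries of [x] over [A] and its complement, then
   [x^T K_A x = 2ab] and [x^T K_A J x = (a |~A| + b |A|)(a + b)], whence
   [x^T K_A (2/n J - I) x = 2/n (|~A| a^2 + |A| b^2) >= 0].  If the total
   vanishes, [x] sums to zero on the vertex set and on every cut, and these
   sets span all of R^n, so [x = 0].  The cut decomposition is built by
   induction, removing a pendant vertex, whose existence follows from the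
   edge count. *)

(* These properties characterise the graph distance of a connected graph, and
   they are inherited by the graph with a pendant vertex removed. *)
Record bfs_distance (V : finType) (e : rel V) (d : V -> V -> nat) : Prop :=
  BfsDistance {
    dist_refl : forall i, d i i = 0;
    dist_edge : forall i w j, e w j -> d i j <= (d i w).+1;
    dist_pred : forall i j, i != j -> exists2 w, e w j & (d i w).+1 = d i j }.

Section BfsDistance.
Variables (V : finType) (e : rel V) (d : V -> V -> nat).
Hypothesis bfs_d : bfs_distance e d.

Lemma bfs_dist_triangle i j k : d i k <= d i j + d j k.
Proof.
elim: {k}(d j k) {-2}k (erefl (d j k)) => [|m IH] k djk.
  case: (eqVneq j k) => [<-|njk]; first by rewrite (dist_refl bfs_d) addn0.
  by have [w _] := dist_pred bfs_d njk; rewrite djk.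
case: (eqVneq j k) => [<-|njk]; first by rewrite (dist_refl bfs_d) addn0.
have [w ewk dwk] := dist_pred bfs_d njk.
have := IH w (eq_add_S _ _ (etrans dwk djk)); have := dist_edge bfs_d i ewk; lia.
Qed.

Lemma bfs_dist_sym : symmetric e -> forall i j, d i j = d j i.
Proof.
move=> se; suff le_d i j : d j i <= d i j by move=> i j; apply/eqP; rewrite eqn_leq !le_d.
elim: {j}(d i j) {-2}j (erefl (d i j)) => [|m IH] j dij.
  case: (eqVneq i j) => [<-|nij]; first by rewrite (dist_refl bfs_d).
  by have [w _] := dist_pred bfs_d nij; rewrite dij.
case: (eqVneq i j) => [<-|nij]; first by rewrite (dist_refl bfs_d).
have [w ewj dwj] := dist_pred bfs_d nij.
have := IH w (eq_add_S _ _ (etrans dwj dij)).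
have := bfs_dist_triangle j w i.
have ejw : e j w by rewrite se.
have := dist_edge bfs_d j ejw; rewrite (dist_refl bfs_d).
lia.
Qed.

Lemma bfs_dist_pendant l w : (forall u, e u l -> u = w) ->
  forall j, j != l -> d j l = (d j w).+1.
Proof. by move=> uniq_w j njl; have [u /uniq_w -> <-] := dist_pred bfs_d njl. Qed.

End BfsDistance.

Definition degree (V : finType) (e : rel V) (i : V) := \sum_j (e i j : nat).

Record cut_decomposition (R : zmodType) (V : finType) (d : V -> V -> nat)
    (cs : seq {set V}) : Prop := CutDecomposition {
  dist_cut_count : forall i j, d i j = count (fun A : {set V} => (i \in A) != (j \in A)) cs;
  cut_proper : forall A, A \in cs -> 0 < #|A| /\ 0 < #|~: A|;
  cut_span : forall x : V -> R, (\sum_i x i = 0)%R ->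
    (forall A, A \in cs -> (\sum_(i in A) x i = 0)%R) -> forall i, (x i = 0)%R }.

Lemma exists_degree_le1 (V : finType) (e : rel V) N : #|V| = N.+2 ->
  \sum_i degree e i = 2 * N.+1 -> exists l, degree e l <= 1.
Proof.
move=> cardV sum_deg; apply/existsP; apply/contraT; rewrite negb_exists => /forallP big_deg.
suff : \sum_(i : V) 2 <= \sum_i degree e i by rewrite sum_nat_const cardT -cardE cardV sum_deg; lia.
by apply: leq_sum => i _; rewrite ltnNge big_deg.
Qed.

Lemma degree_le1_neighbor (V : finType) (e : rel V) l w :
  degree e l <= 1 -> e l w -> forall u, e l u -> u = w.
Proof.
move=> deg_l elw u elu; apply/eqP/contraT => nuw.
by move: deg_l; rewrite /degree (bigD1 w) //= (bigD1 u) //= elw elu.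
Qed.

Lemma cut_decomposition_neq_nil (R : zmodType) (V : finType) (e : rel V) d cs (i j : V) :
  bfs_distance e d -> cut_decomposition R d cs -> i != j -> cs != [::].
Proof.
move=> bfs_d cuts /(dist_pred bfs_d)[w _]; rewrite [d i j](dist_cut_count cuts).
by case: cs {cuts}.
Qed.

Section PendantRemoval.
Variables (V : finType) (e : rel V) (l w : V).
Hypotheses (se : symmetric e) (ie : irreflexive e) (elw : e l w).
Hypothesis pendant : forall u, e l u -> u = w.

Let pendant_to u : e u l -> u = w. Proof. by rewrite se => /pendant. Qed.
Let nwl : w != l. Proof. by apply: contraTneq elw => ->; rewrite ie. Qed.
Let e' : rel {x in predC1 l} := relpre val e.

Lemma degree_sum_remove_pendant : \sum_i degree e i = (\sum_a degree e' a).+2.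
Proof.
have deg_l : degree e l = 1.
  rewrite /degree (bigD1 w) //= elw big1 // => u nuw.
  by apply/eqP; rewrite eqb0; apply: contra nuw => /pendant ->.
have deg_to_l : \sum_(i | i != l) (e i l : nat) = 1.
  rewrite (bigD1 w) //= (se w) elw big1 // => u /andP[_ nuw].
  by apply/eqP; rewrite eqb0; apply: contra nuw => /pendant_to ->.
have deg_split i : degree e i = e i l + \sum_(v | v != l) (e i v : nat).
  by rewrite /degree (bigD1 l).
rewrite (bigD1 l) //= deg_l (eq_bigr _ (fun i _ => deg_split i)) big_split /=.
rewrite deg_to_l; congr (_.+2).
rewrite (big_sub (predC1 l) (fun i => \sum_(v in predC1 l) (e i v : nat))).
by apply: eq_bigr => a _; rewrite (big_sub (predC1 l)).
Qed.

Lemma bfs_distance_remove_pendant d : bfs_distance e d ->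
  bfs_distance e' (fun a b => d (val a) (val b)).
Proof.
move=> bfs_d; split=> [a|a b c|a b nab] /=; first exact: (dist_refl bfs_d).
  exact: (dist_edge bfs_d).
have [u eub dub] := dist_pred bfs_d (nab : val a != val b).
have [ul|nul] := eqVneq u l; last by exists (Sub u nul).
move: eub dub; rewrite ul => /pendant bw.
by rewrite bw (bfs_dist_pendant bfs_d pendant_to (valP a)); lia.
Qed.

(* [insubd w'] sends [l] to its neighbour [w], so a lifted cut puts [l] on the
   side of [w]; [[set l]] is the cut of the pendant edge. *)
Let w' : {x in predC1 l} := Sub w nwl.
Let lift_cut (A : {set {x in predC1 l}}) := [set v | insubd w' v \in A].

Lemma cut_decomposition_add_pendant (R : zmodType) d cs : bfs_distance e d ->
  cut_decomposition R (fun a b => d (val a) (val b)) cs ->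
  cut_decomposition R d ([set l] :: map lift_cut cs).
Proof.
move=> bfs_d [count_cs proper_cs span_cs].
have insubd_id v : v != l -> val (insubd w' v) = v by move=> nvl; rewrite val_insubd ifT.
have insubd_l : val (insubd w' l) = w by rewrite val_insubd ifN // negbK.
have dist_l := bfs_dist_pendant bfs_d pendant_to.
split.
- move=> i j /=.
  have -> : count (fun A : {set V} => (i \in A) != (j \in A)) (map lift_cut cs) =
      d (val (insubd w' i)) (val (insubd w' j)).
    by rewrite count_cs count_map; apply: eq_count => A; rewrite /= !inE.
  rewrite !inE.
  have d_sym := bfs_dist_sym bfs_d se.
  case: (eqVneq i l) => [->|nil]; case: (eqVneq j l) => [->|njl] /=.
  + by rewrite (dist_refl bfs_d) insubd_l (dist_refl bfs_d).
  + by rewrite insubd_l insubd_id // d_sym dist_l // d_sym.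
  + by rewrite insubd_l insubd_id // dist_l.
  + by rewrite !insubd_id.
- move=> A; rewrite inE => /predU1P[-> | /mapP[A' /proper_cs[]]].
    split; apply/card_gt0P; first by exists l; rewrite inE.
    by exists w; rewrite !inE.
  move=> /card_gt0P[a aA] /card_gt0P[b]; rewrite inE => bA ->.
  by split; apply/card_gt0P; [exists (val a) | exists (val b)]; rewrite !inE valKd.
- move=> x sum_x sum_cuts.
  have xl : (x l = 0)%R by have := sum_cuts [set l] (mem_head _ _); rewrite big_set1.
  have sum_x' : (\sum_(a : {x in predC1 l}) x (val a) = 0)%R.
    by rewrite -big_sub; move: sum_x; rewrite (bigD1 l) //= xl add0r.
  have sum_cuts' A : A \in cs -> (\sum_(a in A) x (val a) = 0)%R.
    move=> csA; have := sum_cuts (lift_cut A); rewrite inE map_f ?orbT // => /(_ isT).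
    rewrite (bigID (pred1 l)) /= big1 ?add0r => [|i /andP[_ /eqP ->] //].
    rewrite (eq_bigl (fun i => (i \in predC1 l) && (i \in lift_cut A))) => [|i].
      by rewrite big_sub_cond (eq_bigl (mem A)) // => a; rewrite !inE valKd.
    by rewrite andbC.
  move=> i; case: (eqVneq i l) => [->//|nil].
  exact: (span_cs _ sum_x' sum_cuts' (Sub i nil)).
Qed.

End PendantRemoval.

Lemma tree_cut_decomposition (R : zmodType) N (V : finType) (e : rel V) d :
  #|V| = N.+1 -> symmetric e -> irreflexive e -> \sum_i degree e i = 2 * N ->
  bfs_distance e d -> exists cs, cut_decomposition R d cs.
Proof.
elim: N V e d => [|N IH] V e d cardV se ie sum_deg bfs_d.
  have [z Vz] := fintype1 cardV.
  exists [::]; split=> // [i j|x sum_x _ i]; first by rewrite (Vz i) (Vz j) (dist_refl bfs_d).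
  by move: sum_x; rewrite (big_pred1 z) ?(Vz i) // => k; rewrite (Vz k) !inE eqxx.
have [l deg_l] := exists_degree_le1 cardV sum_deg.
have [j njl] : exists j, j != l by apply/card_gt0P; rewrite cardC1 cardV.
have [w ewl _] := dist_pred bfs_d njl.
have elw : e l w by rewrite se.
have pendant := degree_le1_neighbor deg_l elw.
have cardV' : #|{: {x in predC1 l}}| = N.+1 by rewrite card_sig cardC1 cardV.
have [|||cs' cs'_cuts] := IH _ _ _ cardV' _ _ _ (bfs_distance_remove_pendant se ie elw pendant bfs_d).
- by move=> a b; apply: se.
- by move=> a; apply: ie.
- by have := degree_sum_remove_pendant se ie elw pendant; rewrite sum_deg; lia.
by eexists; exact: (cut_decomposition_add_pendant se ie elw pendant bfs_d cs'_cuts).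
Qed.

Section GraphDistance.
Variables (n : nat) (e : rel 'I_n).

Lemma walk_of_lengthP k i j :
  reflect (exists p : seq 'I_n, [/\ size p = k, path e i p & last i p = j])
    (walk_of_length e k i j).
Proof.
apply: (iffP existsP) => [[p /andP[pp /eqP pl]] | [p [ps pp pl]]].
  by exists (val p); rewrite size_tuple.
have ps' : size p == k by rewrite ps.
by exists (Tuple ps'); rewrite /= pp pl eqxx.
Qed.

Lemma gdist_le k i j : k < n -> walk_of_length e k i j -> gdist e i j <= k.
Proof.
move=> lt_kn wk; rewrite /gdist leqNgt; apply/negP => lt_k.
by have := before_find 0 lt_k; rewrite nth_iota // add0n wk.
Qed.

Lemma gdist_walk k i j : k < n -> walk_of_length e k i j ->
  gdist e i j < n /\ walk_of_length e (gdist e i j) i j.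
Proof.
move=> lt_kn wk.
have has_walk : has (fun k => walk_of_length e k i j) (iota 0 n).
  by apply/hasP; exists k => //; rewrite mem_iota.
have lt_dn : gdist e i j < n by rewrite /gdist -[n in _ < n](size_iota 0 n) -has_find.
by split=> //; have := nth_find 0 has_walk; rewrite nth_iota ?add0n.
Qed.

Lemma connect_short_walk i j : connect e i j -> exists2 k, k < n & walk_of_length e k i j.
Proof.
move=> /connectP[p pp ->]; have [p' pp' uniq_p' _] := shortenP pp.
exists (size p'); last by apply/walk_of_lengthP; exists p'.
by have := max_card (mem (i :: p')); rewrite (card_uniqP uniq_p') card_ord.
Qed.

Lemma gdist_bfs_distance : (forall i j, connect e i j) -> bfs_distance e (gdist e).
Proof.
move=> conn.
have gdist_spec i j : gdist e i j < n /\ walk_of_length e (gdist e i j) i j.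
  by have [k lt_kn wk] := connect_short_walk (conn i j); exact: gdist_walk wk.
have gdist_edge i w j : e w j -> gdist e i j <= (gdist e i w).+1.
  move=> ewj; have [lt_dn /walk_of_lengthP[p [ps pp pl]]] := gdist_spec i w.
  case: (ltnP (gdist e i w).+1 n) => lt_d1n; last by have [] := gdist_spec i j; lia.
  apply: gdist_le => //; apply/walk_of_lengthP; exists (rcons p j).
  by rewrite size_rcons ps rcons_path pp pl ewj last_rcons.
split=> // [i|i j nij].
  have lt_in : 0 < n by case: n i => [[]|].
  by apply/eqP; rewrite -leqn0; apply: gdist_le => //; apply/walk_of_lengthP; exists [::].
have [lt_dn /walk_of_lengthP[p [ps pp pl]]] := gdist_spec i j.
case/lastP: p ps pp pl => [|q y] ps pp pl; first by rewrite -pl eqxx in nij.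
move: pp; rewrite rcons_path last_rcons in pl * => /andP[qp eqy]; subst y.
exists (last i q) => //.
have le_dq : gdist e i (last i q) <= size q.
  apply: gdist_le; first by move: lt_dn; rewrite -ps size_rcons; lia.
  by apply/walk_of_lengthP; exists q.
have := gdist_edge i _ _ eqy; move: le_dq; rewrite -ps size_rcons => le_dq le_qd.
by apply/eqP; rewrite eqSS eqn_leq le_dq.
Qed.

Lemma degree_sum_edge_set : symmetric e -> irreflexive e ->
  \sum_i degree e i = 2 * #|edge_set e|.
Proof.
move=> se ie.
have split_edge i j : (e i j : nat) = ((i < j) && e i j) + ((j < i) && e j i).
  rewrite (se j i); case: (ltngtP i j) => [||/val_inj ->]; rewrite ?addn0 //.
  by rewrite ie.
rewrite /degree (eq_bigr _ (fun i _ => eq_bigr _ (fun j _ => split_edge i j))).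
under eq_bigr do rewrite big_split /=.
rewrite big_split /= [X in (_ + X)%N]exchange_big /= addnn -mul2n; congr (2 * _).
rewrite /edge_set -sum1dep_card pair_bigA /= [RHS]big_mkcond /=.
by apply: eq_bigr => -[i j] _ /=; case: (_ && _).
Qed.

End GraphDistance.

Local Open Scope ring_scope.

Lemma sumr_setU_setC (V : nmodType) (I : finType) (A : {set I}) (F : I -> V) :
  \sum_i F i = \sum_(i in A) F i + \sum_(i in ~: A) F i.
Proof. by rewrite (bigID (mem A)) /=; congr (_ + _); apply: eq_bigl => i; rewrite inE. Qed.

Lemma sumr_mul_if_set (R : pzSemiRingType) (I : finType) (A : {set I}) (F : I -> R) a b :
  \sum_i (if i \in A then a else b) * F i = a * \sum_(i in A) F i + b * \sum_(i in ~: A) F i.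
Proof.
rewrite (sumr_setU_setC A) !mulr_sumr.
by congr (_ + _); apply: eq_bigr => i; rewrite ?inE; [move=> -> | move=> /negbTE ->].
Qed.

Definition cut_mx (R : pzSemiRingType) n (A : {set 'I_n}) : 'M[R]_n :=
  \matrix_(i, j) ((i \in A) != (j \in A))%:R.

Lemma dist_matrix_cut_sum (R : pzRingType) n (e : rel 'I_n) cs :
  cut_decomposition R (gdist e) cs -> dist_matrix R e = \sum_(A <- cs) cut_mx R A.
Proof.
move=> [count_cs _ _]; apply/matrixP => i j.
rewrite summxE !mxE count_cs -sum1_count natr_sum big_mkcond /=.
by apply: eq_bigr => A _; rewrite mxE; case: ifP.
Qed.

Lemma qform_mul_const_sub1 (R : comPzRingType) n (D : 'M[R]_n) c (x : 'cV[R]_n) :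
  (x^T *m (D *m (c *: const_mx 1 - 1%:M)) *m x) 0 0 =
  c * (\sum_i x i 0 * \sum_k D i k) * (\sum_j x j 0)
  - \sum_i x i 0 * \sum_j D i j * x j 0.
Proof.
rewrite mulmxBr mulmx1 -scalemxAr mulmxBr mulmxBl -scalemxAr -scalemxAl !mxE.
rewrite -mulrA [X in _ = _ * X - _]mulr_sumr; congr (_ * _ - _).
  apply: eq_bigr => j _; rewrite !mxE; congr (_ * _); apply: eq_bigr => i _.
  by rewrite !mxE; congr (_ * _); apply: eq_bigr => k _; rewrite !mxE mulr1.
under eq_bigr do rewrite mxE mulr_suml.
rewrite exchange_big; apply: eq_bigr => i _; rewrite mulr_sumr.
by apply: eq_bigr => j _; rewrite !mxE mulrA.
Qed.

Lemma cut_mx_qform (R : numFieldType) n (A : {set 'I_n}) (x : 'cV[R]_n) : (0 < n)%N ->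
  (x^T *m (cut_mx R A *m ((2 / n%:R) *: const_mx 1 - 1%:M)) *m x) 0 0 =
  2 / n%:R * (#|~: A|%:R * (\sum_(i in A) x i 0) ^+ 2
              + #|A|%:R * (\sum_(i in ~: A) x i 0) ^+ 2).
Proof.
move=> n_gt0; set a := \sum_(i in A) x i 0; set b := \sum_(i in ~: A) x i 0.
have cut_row i (F : 'I_n -> R) : \sum_k cut_mx R A i k * F k =
    if i \in A then \sum_(k in ~: A) F k else \sum_(k in A) F k.
  have cut_if k : cut_mx R A i k = if k \in A then (i \notin A)%:R else (i \in A)%:R.
    by rewrite mxE; case: (i \in A); case: (k \in A).
  under eq_bigr do rewrite cut_if.
  by rewrite sumr_mul_if_set; case: (i \in A); rewrite /= mul0r mul1r ?addr0 ?add0r.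
have row_sum i : \sum_k cut_mx R A i k = if i \in A then #|~: A|%:R else #|A|%:R.
  under eq_bigr do rewrite -[cut_mx R A i _]mulr1.
  by rewrite cut_row !sumr_const; case: (i \in A).
rewrite qform_mul_const_sub1.
under eq_bigr do rewrite row_sum mulrC.
under [X in _ - X]eq_bigr do rewrite cut_row mulrC.
rewrite !sumr_mul_if_set -/a -/b (sumr_setU_setC A) -/a -/b.
have -> : n%:R = #|A|%:R + #|~: A|%:R :> R by rewrite -natrD cardsC card_ord.
by field; rewrite -natrD cardsC card_ord pnatr_eq0 -lt0n.
Qed.

Lemma weighted_sqr_sum_eq0 (R : realDomainType) (p q a b : R) : 0 < p -> 0 < q ->
  (p * a ^+ 2 + q * b ^+ 2 == 0) = (a == 0) && (b == 0).
Proof.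
move=> p_gt0 q_gt0.
have pa_ge0 := mulr_ge0 (ltW p_gt0) (sqr_ge0 a).
have qb_ge0 := mulr_ge0 (ltW q_gt0) (sqr_ge0 b).
rewrite paddr_eq0 //.
by rewrite (mulf_eq0 p) (mulf_eq0 q) !sqrf_eq0 (gt_eqF p_gt0) (gt_eqF q_gt0).
Qed.

Lemma cut_decomposition_eq0 (R : zmodType) n d cs (x : 'cV[R]_n) :
  cut_decomposition R d cs -> cs != [::] ->
  (forall A, A \in cs -> \sum_(i in A) x i 0 = 0 /\ \sum_(i in ~: A) x i 0 = 0) ->
  x = 0.
Proof.
move=> cuts; case: cs cuts => // A0 cs cuts _ sums0.
apply/matrixP => i j; rewrite (ord1 j) mxE; move: i.
apply: (cut_span cuts (x := fun i => x i 0)) => [|A /sums0[] //].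
by have [a0 b0] := sums0 A0 (mem_head _ _); rewrite (sumr_setU_setC A0) a0 b0 addr0.
Qed.

Unset Implicit Arguments.

Theorem mainTheorem12 (R : realType) (n : nat) (e : rel 'I_n) :
  (3 <= n)%N -> is_tree e ->
  let M := dist_matrix R e in
  let C := M *m ((2 / n%:R) *: const_mx 1 - 1%:M) in
  forall x : 'cV[R]_n, x != 0 -> 0 < (x^T *m C *m x) 0 0.
Proof.
move=> n_ge3 [[se ie] conn card_edges] M C x x_neq0.
have bfs_d := gdist_bfs_distance conn.
have sum_deg : (\sum_i degree e i = 2 * n.-1)%N by rewrite degree_sum_edge_set // card_edges.
have card_V : #|'I_n| = n.-1.+1 by rewrite card_ord; lia.
have [cs cuts] := tree_cut_decomposition R card_V se ie sum_deg bfs_d.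
have n_gt0 : (0 < n)%N by lia.
have n_gt1 : (1 < n)%N by lia.
have cs_neq_nil : cs != [::].
  exact: (cut_decomposition_neq_nil bfs_d cuts (i := Ordinal n_gt0) (j := Ordinal n_gt1)).
rewrite /C /M (dist_matrix_cut_sum cuts) mulmx_suml mulmx_sumr mulmx_suml summxE.
under eq_bigr do rewrite cut_mx_qform //.
have term_ge0 A : 0 <= 2 / n%:R * (#|~: A|%:R * (\sum_(i in A) x i 0) ^+ 2
                                  + #|A|%:R * (\sum_(i in ~: A) x i 0) ^+ 2) :> R.
  apply: mulr_ge0; first by rewrite divr_ge0 ?ler0n.
  by apply: addr_ge0; apply: mulr_ge0; rewrite ?ler0n ?sqr_ge0.
rewrite lt0r sumr_ge0 ?andbT // psumr_eq0 //; apply: contra x_neq0 => /allP terms0.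
apply/eqP/(cut_decomposition_eq0 cuts cs_neq_nil) => A csA.
have [A_gt0 AC_gt0] := cut_proper cuts csA.
have := terms0 A csA; rewrite /= !mulf_eq0 invr_eq0 !pnatr_eq0 (gtn_eqF n_gt0) /=.
rewrite weighted_sqr_sum_eq0 ?ltr0n //.
by move=> /andP[/eqP a0 /eqP b0].
Qed.
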